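(* Let $D\le E$ be subgroups of a group $G$ with $E$ normal in $G$, and assume that the sandwich classification theorem holds for $L(D,E)$. Suppose further: (1) $D$ is generated by a union of finitely generated perfect subgroups; (2) for every $D$-full subgroup $F\le E$, the quotient group $N_E(F)/F$ is quasi-solvable. Then the sandwich classification theorem holds for $L(D,G)$, and the set of $D$-full subgroups of $G$ coincides with the set of $D$-full subgroups of $E$.
   Context: A group is perfect if it equals its commutator subgroup. A group is quasi-solvable if it is the union of an ascending chain of solvable subgroups. $X^Y$ denotes the subgroup generated by all $b^{-1}ab$, $a\in X$, $b\in Y$. $L(D,G)$ is the lattice of subgroups of $G$ containing $D$; $F\in L(D,G)$ is $D$-full if $D^F=F$. The lattice $L(D,G)$ satisfies the sandwich classification theorem if for every $H\in L(D,G)$ the subgroup $D^H$ is $D$-full and $H\le N_G(D^H)$ (equivalently, $L(D,G)$ is the union of the sets $\{H: F\le H\le N_G(F)\}$ over $D$-full $F$). *)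

From Stdlib Require Import List.

Record grp := Grp {
  carrier :> Type;
  mul : carrier -> carrier -> carrier;
  inv : carrier -> carrier;
  one : carrier;
  mulA : forall x y z, mul x (mul y z) = mul (mul x y) z;
  mul1g : forall x, mul one x = x;
  mulVg : forall x, mul (inv x) x = one
}.

Section Defs.
Variable G : grp.

Definition subset (X Y : G -> Prop) : Prop := forall x, X x -> Y x.
Definition same (X Y : G -> Prop) : Prop := forall x, X x <-> Y x.

Definition subgroup (H : G -> Prop) : Prop :=
  H (one G) /\ (forall x y, H x -> H y -> H (mul G x y)) /\ (forall x, H x -> H (inv G x)).

Definition gen (S : G -> Prop) : G -> Prop :=
  fun x => forall H, subgroup H -> subset S H -> H x.

Definition conjg (a b : G) : G := mul G (mul G (inv G b) a) b.

Definition conj_closure (X Y : G -> Prop) : G -> Prop :=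
  gen (fun z => exists a b, X a /\ Y b /\ z = conjg a b).

Definition normalizer (Y X : G -> Prop) : G -> Prop :=
  fun g => Y g /\ forall x, X x <-> X (conjg x g).

Definition normal_in_G (E : G -> Prop) : Prop :=
  subgroup E /\ forall x g, E x -> E (conjg x g).

Definition commg (a b : G) : G := mul G (mul G (mul G (inv G a) (inv G b)) a) b.

Definition derived_sub (H : G -> Prop) : G -> Prop :=
  gen (fun z => exists a b, H a /\ H b /\ z = commg a b).

Fixpoint derived (n : nat) (H : G -> Prop) : G -> Prop :=
  match n with 0 => H | S m => derived_sub (derived m H) end.

Definition perfect (H : G -> Prop) : Prop := subgroup H /\ same H (derived_sub H).

Definition fin_gen (H : G -> Prop) : Prop :=
  exists l : list G, same H (gen (fun x => In x l)).

Definition in_L (D K H : G -> Prop) : Prop := subgroup H /\ subset D H /\ subset H K.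

Definition D_full (D F : G -> Prop) : Prop := same (conj_closure D F) F.

Definition sandwich (D K : G -> Prop) : Prop :=
  forall H, in_L D K H ->
    D_full D (conj_closure D H) /\ subset H (normalizer K (conj_closure D H)).

Definition gen_by_fg_perfect (D : G -> Prop) : Prop :=
  exists P : (G -> Prop) -> Prop,
    (forall Q, P Q -> perfect Q /\ fin_gen Q) /\
    same D (gen (fun x => exists Q, P Q /\ Q x)).

(* The quotient N/F (F normal in N) is quasi-solvable: it is the union of an
   ascending chain of solvable subgroups.  Via the correspondence theorem,
   subgroups of N/F are H/F with F <= H <= N, and H/F is solvable iff some
   derived subgroup H^(n) lies in F. *)
Definition quasi_solvable_quot (N F : G -> Prop) : Prop :=
  exists C : (G -> Prop) -> Prop,
    (forall H, C H -> subgroup H /\ subset F H /\ subset H N /\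
                      exists n, subset (derived n H) F) /\
    (forall H1 H2, C H1 -> C H2 -> subset H1 H2 \/ subset H2 H1) /\
    (forall x, N x -> exists H, C H /\ H x).

End Defs.

(* Let H contain D and put F := D^(H ∩ E), which is D-full and normalized by
   H ∩ E by the sandwich theorem for L(D,E).  For h in H, every finitely
   generated perfect generator K of D has K^h inside H ∩ E <= N_E(F).  Its
   finitely many generators lie in one member of the solvable chain exhausting
   N_E(F)/F, so some derived subgroup of K^h lies in F; as K^h is perfect,
   K^h <= F.  Hence D^H = F; and a D-full F satisfies F = D^F <= E. *)
From Stdlib Require Import List.

Section GroupTheory.

Variable G : grp.

Local Notation "x * y" := (mul G x y).
Local Notation "x ^-1" := (inv G x) (at level 3, format "x ^-1").
Local Notation "1" := (one G).

Lemma mulgA (x y z : G) : x * y * z = x * (y * z).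
Proof. symmetry; apply mulA. Qed.

Lemma mulgV (x : G) : x * x^-1 = 1.
Proof.
  rewrite <- (mul1g G (x * x^-1)).
  rewrite <- (mulVg G x^-1) at 1.
  rewrite mulgA, <- (mulgA x^-1 x), (mulVg G x), mul1g; apply mulVg.
Qed.

Lemma mulg1 (x : G) : x * 1 = x.
Proof. rewrite <- (mulVg G x), mulA, mulgV, mul1g; reflexivity. Qed.

Lemma mulKg (x y : G) : x * (x^-1 * y) = y.
Proof. rewrite mulA, mulgV, mul1g; reflexivity. Qed.

Lemma mulKVg (x y : G) : x^-1 * (x * y) = y.
Proof. rewrite mulA, mulVg, mul1g; reflexivity. Qed.

Lemma invg_unique (x y : G) : x * y = 1 -> x = y^-1.
Proof. intros Hxy; rewrite <- (mulg1 x), <- (mulgV y), mulA, Hxy, mul1g; reflexivity. Qed.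

Lemma invgK (x : G) : (x^-1)^-1 = x.
Proof. symmetry; apply invg_unique, mulgV. Qed.

Lemma invMg (x y : G) : (x * y)^-1 = y^-1 * x^-1.
Proof. symmetry; apply invg_unique; rewrite mulgA, mulKVg, mulVg; reflexivity. Qed.

Lemma invg1 : 1^-1 = 1.
Proof. symmetry; apply invg_unique, mul1g. Qed.

Ltac gsimpl := repeat progress (rewrite ?invMg, ?invgK, ?invg1, ?mulgA,
  ?mulKg, ?mulKVg, ?mulgV, ?mulVg, ?mulg1, ?mul1g).

Lemma conjg1 (x : G) : conjg G x 1 = x.
Proof. unfold conjg; gsimpl; reflexivity. Qed.

Lemma conjgM (x a b : G) : conjg G (conjg G x a) b = conjg G x (a * b).
Proof. unfold conjg; gsimpl; reflexivity. Qed.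

Lemma conjgK (x h : G) : conjg G (conjg G x h) h^-1 = x.
Proof. unfold conjg; gsimpl; reflexivity. Qed.

Definition ghom (f : G -> G) : Prop :=
  (forall x y, f (x * y) = f x * f y) /\ f 1 = 1 /\ (forall x, f x^-1 = (f x)^-1).

Lemma conjg_hom (h : G) : ghom (fun x => conjg G x h).
Proof. unfold conjg; repeat split; intros; gsimpl; reflexivity. Qed.

Lemma hom_commg (f : G -> G) (a b : G) :
  ghom f -> f (commg G a b) = commg G (f a) (f b).
Proof. intros [fM [_ fV]]; unfold commg; rewrite !fM, !fV; reflexivity. Qed.

Definition preim (f : G -> G) (X : G -> Prop) : G -> Prop := fun x => X (f x).

Definition setI (X Y : G -> Prop) : G -> Prop := fun x => X x /\ Y x.

Section Subgroups.

Variable H : G -> Prop.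
Hypothesis subH : subgroup G H.

Lemma group1 : H 1.
Proof. apply subH. Qed.

Lemma groupM (x y : G) : H x -> H y -> H (x * y).
Proof. apply subH. Qed.

Lemma groupV (x : G) : H x -> H x^-1.
Proof. apply subH. Qed.

Lemma subgroup_preim (f : G -> G) : ghom f -> subgroup G (preim f H).
Proof.
  intros [fM [f1 fV]]; unfold preim; repeat split.
  - rewrite f1; apply group1.
  - intros x y Hx Hy; rewrite fM; apply groupM; assumption.
  - intros x Hx; rewrite fV; apply groupV; assumption.
Qed.

Lemma subgroup_setI (K : G -> Prop) : subgroup G K -> subgroup G (setI H K).
Proof.
  intros subK; split; [| split].
  - split; [apply group1 | apply subK].
  - intros x y [Hx Kx] [Hy Ky]; split; [apply groupM | apply subK]; assumption.
  - intros x [Hx Kx]; split; [apply groupV | apply subK]; assumption.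
Qed.

End Subgroups.

Lemma subgroup_gen (S : G -> Prop) : subgroup G (gen G S).
Proof.
  split; [| split].
  - intros K subK _; apply group1, subK.
  - intros x y Sx Sy K subK SK; apply (groupM K); [| apply Sx | apply Sy]; assumption.
  - intros x Sx K subK SK; apply (groupV K), Sx; assumption.
Qed.

Lemma sub_gen (S : G -> Prop) : subset G S (gen G S).
Proof. intros x Sx K _ SK; apply SK, Sx. Qed.

Lemma gen_subG (S K : G -> Prop) : subgroup G K -> subset G S K -> subset G (gen G S) K.
Proof. intros subK SK x Sx; apply Sx; assumption. Qed.

Lemma gen_sub_preim (f : G -> G) (S K : G -> Prop) :
  ghom f -> subgroup G K -> subset G S (preim f K) -> subset G (gen G S) (preim f K).
Proof. intros homf subK; apply gen_subG, subgroup_preim; assumption. Qed.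

Lemma derived_sub_mono (X Y : G -> Prop) :
  subset G X Y -> subset G (derived_sub G X) (derived_sub G Y).
Proof.
  intros sXY; apply gen_subG; [apply subgroup_gen |].
  intros z [a [b [Xa [Xb ->]]]]; apply sub_gen; exists a, b; auto.
Qed.

Lemma derived_mono (n : nat) (X Y : G -> Prop) :
  subset G X Y -> subset G (derived G n X) (derived G n Y).
Proof. induction n; simpl; auto using derived_sub_mono. Qed.

Lemma derived_sub_preim (f : G -> G) (X : G -> Prop) :
  ghom f -> subset G (derived_sub G (preim f X)) (preim f (derived_sub G X)).
Proof.
  intros homf; apply gen_sub_preim; [assumption | apply subgroup_gen |].
  intros z [a [b [Xa [Xb ->]]]]; unfold preim; rewrite hom_commg by assumption.
  apply sub_gen; exists (f a), (f b); auto.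
Qed.

Lemma derived_preim (f : G -> G) (n : nat) (X : G -> Prop) :
  ghom f -> subset G (derived G n (preim f X)) (preim f (derived G n X)).
Proof.
  intros homf; induction n as [|n IHn]; simpl; [intros x; exact id |].
  intros x Dx; apply derived_sub_preim; [assumption |].
  exact (derived_sub_mono _ _ IHn x Dx).
Qed.

Lemma perfect_sub_derived (K : G -> Prop) (n : nat) :
  perfect G K -> subset G K (derived G n K).
Proof.
  intros [_ KK']; induction n as [|n IHn]; simpl; [intros x; exact id |].
  intros x Kx; apply (derived_sub_mono _ _ IHn), KK', Kx.
Qed.

Definition chain (C : (G -> Prop) -> Prop) : Prop :=
  forall H1 H2, C H1 -> C H2 -> subset G H1 H2 \/ subset G H2 H1.

Lemma chain_bound_list (C : (G -> Prop) -> Prop) (l : list G) :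
  chain C -> (exists H, C H) -> (forall y, In y l -> exists H, C H /\ H y) ->
  exists H, C H /\ forall y, In y l -> H y.
Proof.
  intros chainC [H0 CH0]; induction l as [|a l IHl]; intros cover.
  - exists H0; split; [assumption | intros y []].
  - destruct IHl as [H [CH Hl]]; [intros y ly; apply cover; right; exact ly |].
    destruct (cover a (or_introl eq_refl)) as [Ha [CHa Haa]].
    destruct (chainC H Ha CH CHa) as [sHHa | sHaH].
    + exists Ha; split; [assumption |]; intros y [<- | ly]; auto.
    + exists H; split; [assumption |]; intros y [<- | ly]; auto.
Qed.

Lemma perfect_image_sub_quasi_solvable (f : G -> G) (N F K : G -> Prop) :
  ghom f -> quasi_solvable_quot G N F -> perfect G K -> fin_gen G K ->
  subset G K (preim f N) -> subset G K (preim f F).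
Proof.
  intros homf [C [memC [chainC coverN]]] perfK [l Kl] sKN.
  assert (Kgen : subset G K (gen G (fun x => In x l))) by (intros x; apply Kl).
  destruct (chain_bound_list C (map f l) chainC) as [H [CH Hl]].
  - destruct (coverN (f 1)) as [H [CH _]]; [apply sKN, group1, perfK |].
    exists H; exact CH.
  - intros y ly; apply in_map_iff in ly as [x [<- lx]].
    apply coverN, sKN, Kl, sub_gen, lx.
  - destruct (memC H CH) as [subH [_ [_ [n derH]]]].
    assert (sKH : subset G K (preim f H)).
    { intros x Kx; apply (gen_sub_preim f (fun y => In y l) H homf subH).
      - intros y ly; apply Hl, in_map, ly.
      - exact (Kgen x Kx). }
    intros x Kx; apply derH, (derived_preim f n H homf).
    apply (derived_mono n _ _ sKH), perfect_sub_derived; assumption.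
Qed.

Lemma conj_closure_mono (D Y Y' : G -> Prop) :
  subset G Y Y' -> subset G (conj_closure G D Y) (conj_closure G D Y').
Proof.
  intros sYY'; apply gen_subG; [apply subgroup_gen |].
  intros z [a [b [Da [Yb ->]]]]; apply sub_gen; exists a, b; auto.
Qed.

Lemma conj_closure_same (D Y Y' : G -> Prop) :
  same G Y Y' -> same G (conj_closure G D Y) (conj_closure G D Y').
Proof. intros eqY x; split; apply conj_closure_mono; intros y; apply eqY. Qed.

Lemma D_full_same (D F F' : G -> Prop) :
  same G F F' -> D_full G D F -> D_full G D F'.
Proof.
  intros eqF fullF x; rewrite <- (eqF x), <- (fullF x).
  apply conj_closure_same; intros y; symmetry; apply eqF.
Qed.

Lemma sub_conj_closure (D Y : G -> Prop) : Y 1 -> subset G D (conj_closure G D Y).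
Proof. intros Y1 d Dd; apply sub_gen; exists d, 1; rewrite conjg1; auto. Qed.

Lemma conj_closure_sub_normal (D E Y : G -> Prop) :
  subset G D E -> normal_in_G G E -> subset G (conj_closure G D Y) E.
Proof.
  intros sDE [subE nE]; apply gen_subG; [assumption |].
  intros z [a [b [Da [_ ->]]]]; apply nE, sDE, Da.
Qed.

Lemma conj_closure_conjg (D H : G -> Prop) (h : G) :
  subgroup G H -> H h ->
  subset G (conj_closure G D H) (preim (fun x => conjg G x h) (conj_closure G D H)).
Proof.
  intros subH Hh; apply gen_sub_preim; [apply conjg_hom | apply subgroup_gen |].
  intros z [a [b [Da [Hb ->]]]]; unfold preim; rewrite conjgM.
  apply sub_gen; exists a, (b * h); split; [| split]; [| apply (groupM H) |]; auto.
Qed.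

Lemma sub_normalizer_conj_closure (D H K : G -> Prop) :
  subgroup G H -> subset G H K -> subset G H (normalizer G K (conj_closure G D H)).
Proof.
  intros subH sHK h Hh; split; [auto |]; intros x; split.
  - apply conj_closure_conjg; assumption.
  - intros Dxh; rewrite <- (conjgK x h).
    apply conj_closure_conjg; [| apply (groupV H) |]; assumption.
Qed.

End GroupTheory.

Section Sandwich.

Variables (G : grp) (D E : G -> Prop) (P : (G -> Prop) -> Prop).

Hypothesis sDE : subset G D E.
Hypothesis nE : normal_in_G G E.
Hypothesis sandwichE : sandwich G D E.
Hypothesis fg_perfectP : forall K, P K -> perfect G K /\ fin_gen G K.
Hypothesis D_genP : same G D (gen G (fun x => exists K, P K /\ K x)).
Hypothesis quasi_solvableE : forall F, in_L G D E F -> D_full G D F ->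
  quasi_solvable_quot G (normalizer G E F) F.

Lemma in_L_setI (H : G -> Prop) : in_L G D (fun _ => True) H -> in_L G D E (setI G H E).
Proof.
  intros [subH [sDH _]]; split; [apply subgroup_setI; [assumption | apply nE] |].
  split; [intros x Dx; split; auto | intros x []; assumption].
Qed.

Lemma conjg_sub_D_full (F : G -> Prop) (h : G) : in_L G D E F -> D_full G D F ->
  subset G D (preim G (fun x => conjg G x h) (normalizer G E F)) ->
  subset G D (preim G (fun x => conjg G x h) F).
Proof.
  intros LF fullF sDhN x Dx; apply D_genP in Dx; revert x Dx.
  apply gen_sub_preim; [apply conjg_hom | apply LF |].
  intros x [K [PK Kx]]; destruct (fg_perfectP K PK) as [perfK fgK].
  apply (perfect_image_sub_quasi_solvable G _ (normalizer G E F) F K (conjg_hom G h)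
           (quasi_solvableE F LF fullF) perfK fgK); [| exact Kx].
  intros y Ky; apply sDhN, D_genP, sub_gen; exists K; auto.
Qed.

Lemma conj_closure_setI_normal (H : G -> Prop) : in_L G D (fun _ => True) H ->
  same G (conj_closure G D H) (conj_closure G D (setI G H E)).
Proof.
  intros LH; pose proof LH as [subH [sDH _]].
  set (F := conj_closure G D (setI G H E)).
  destruct (sandwichE _ (in_L_setI H LH)) as [fullF nF].
  assert (LF : in_L G D E F).
  { split; [apply subgroup_gen |]; split; [| apply conj_closure_sub_normal; assumption].
    apply sub_conj_closure; split; [apply (group1 G H subH) | apply (group1 G E), nE]. }
  intros x; split; [| apply conj_closure_mono; intros y []; assumption].
  revert x; apply gen_subG; [apply subgroup_gen |].
  intros z [d [h [Dd [Hh ->]]]]; revert d Dd; apply (conjg_sub_D_full F h LF fullF).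
  intros y Dy; apply nF; split; [| apply nE, sDE, Dy].
  exact (groupM G H subH _ _ (groupM G H subH _ _ (groupV G H subH _ Hh) (sDH y Dy)) Hh).
Qed.

Lemma sandwich_whole : sandwich G D (fun _ => True).
Proof.
  intros H LH; pose proof LH as [subH _]; split.
  - apply (D_full_same G D (conj_closure G D (setI G H E))).
    + intros x; symmetry; apply conj_closure_setI_normal, LH.
    + apply sandwichE, in_L_setI, LH.
  - apply sub_normalizer_conj_closure; [assumption | intros x _; exact I].
Qed.

End Sandwich.

Lemma D_full_sub_normal (G : grp) (D E F : G -> Prop) :
  subset G D E -> normal_in_G G E -> D_full G D F -> subset G F E.
Proof.
  intros sDE nE fullF x Fx.
  apply (conj_closure_sub_normal G D E F), fullF, Fx; assumption.
Qed.

Theorem lemma2p5 (G : grp) (D E : G -> Prop) :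
  subgroup G D -> subgroup G E -> subset G D E -> normal_in_G G E ->
  sandwich G D E ->
  gen_by_fg_perfect G D ->
  (forall F, in_L G D E F -> D_full G D F ->
     quasi_solvable_quot G (normalizer G E F) F) ->
  sandwich G D (fun _ => True) /\
  (forall F, (in_L G D (fun _ => True) F /\ D_full G D F) <->
             (in_L G D E F /\ D_full G D F)).
Proof.
  intros _ _ sDE nE sandwichE [P [fg_perfectP D_genP]] quasi_solvableE; split.
  - exact (sandwich_whole G D E P sDE nE sandwichE fg_perfectP D_genP quasi_solvableE).
  - intros F; split; intros [[subF [sDF _]] fullF];
      (split; [split; [| split] | ]); try assumption.
    + apply (D_full_sub_normal G D E F); assumption.
    + intros x _; exact I.
Qed.
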